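(* Let $C=(V',E')$ be a finite connected undirected simple graph, and let $P$ be the set of BFS-trees of $C$, one with root $v$ for each $v\in V'$. Let $T_m\in P$, with root $r$, satisfy $S_d(T_m)=\min_{T\in P}S_d(T)$. Then $r$ is a centroid of $T_m$.
   Context: A BFS-tree of $C$ with root $v$ is the spanning tree constructed by a breadth-first search of $C$ starting at $v$ (visiting vertices level by level by distance from $v$, each non-root vertex attached to the vertex from which it was first discovered). For a rooted tree $T=(V_T,E_T)$ with root $r$, $d_T(x,y)$ is the number of edges on the path between $x$ and $y$ in $T$ and $S_d(T)=\sum_{x\in V_T}d_T(r,x)$. The vertex deviation of $v$ in $T$ is $m(v)=\frac{1}{|V_T|}\sum_{u\in V_T}d_T(v,u)$, and a centroid of $T$ is a vertex minimizing $m(v)$. *)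

From mathcomp Require Import all_boot all_order all_algebra.
Set Implicit Arguments. Unset Strict Implicit. Unset Printing Implicit Defensive.
Import Order.TTheory GRing.Theory Num.Theory.

Section Graphs.
Variable V : finType.

Fixpoint ball (e : rel V) (x : V) (n : nat) : {set V} :=
  match n with
  | 0 => [set x]
  | n'.+1 => ball e x n' :|: [set y | [exists z in ball e x n', e z y]]
  end.

(* Graph distance (number of edges of a shortest path); any path between
   two vertices of a finite graph can be shortened to < #|V| edges.
   Returns #|V| for unreachable vertices (never used here). *)
Definition dist (e : rel V) (x y : V) : nat :=
  find (fun n => y \in ball e x n) (iota 0 #|V|).

Definition simple_connected_graph (e : rel V) : Prop :=
  irreflexive e /\ symmetric e /\ (forall x y : V, connect e x y).

Definition adj_lists (e : rel V) (adj : V -> seq V) : Prop :=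
  forall u, uniq (adj u) /\ (forall w, (w \in adj u) = e u w).

Fixpoint bfs_loop (adj : V -> seq V) (fuel : nat) (queue visited : seq V)
    (par : V -> V) : V -> V :=
  match fuel, queue with
  | 0, _ => par
  | _, [::] => par
  | f.+1, u :: q =>
      let new := undup [seq w <- adj u | w \notin visited] in
      bfs_loop adj f (q ++ new) (visited ++ new)
        (fun w => if w \in new then u else par w)
  end.

(* Parent function of the BFS-tree rooted at v for adjacency lists adj
   (the root is its own parent). *)
Definition bfs_parent (adj : V -> seq V) (v : V) : V -> V :=
  bfs_loop adj #|V| [:: v] [:: v] id.

Definition tree_rel (r : V) (par : V -> V) : rel V :=
  fun x y => ((x != r) && (par x == y)) || ((y != r) && (par y == x)).

Definition is_bfs_tree (e : rel V) (v : V) (par : V -> V) : Prop :=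
  exists adj, adj_lists e adj /\ par = bfs_parent adj v.

Definition Sd (r : V) (par : V -> V) : nat :=
  \sum_(x : V) dist (tree_rel r par) r x.

Definition vdev (r : V) (par : V -> V) (u : V) : rat :=
  ((\sum_(x : V) dist (tree_rel r par) u x)%:R / (#|V|)%:R)%R.

Definition is_centroid (r : V) (par : V -> V) (u : V) : Prop :=
  forall w : V, (vdev r par u <= vdev r par w)%R.

End Graphs.

From mathcomp Require Import all_boot all_order all_algebra.
From mathcomp Require Import zify.
Set Implicit Arguments. Unset Strict Implicit.
Import Num.Theory.

(* BFS discovers vertices level by level, so in the BFS tree T_v every parent
   is strictly closer to v in C; hence d_{T_v}(v, x) = d_C(v, x) and
   S_d(T_v) = sum_x d_C(v, x).  Tree edges are graph edges, so distances in any
   spanning tree dominate distances in C.  For every vertex w this gives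
   sum_x d_{T_m}(w, x) >= sum_x d_C(w, x) = S_d(T_w) >= S_d(T_m)
   = sum_x d_{T_m}(r, x), i.e. m(w) >= m(r). *)

Section Distance.
Variables (V : finType) (e : rel V).
Implicit Types (x y z u w : V) (m n : nat).

Lemma in_ball0 x y : (y \in ball e x 0) = (y == x).
Proof. exact: in_set1. Qed.

Lemma in_ballS x n y :
  (y \in ball e x n.+1) = (y \in ball e x n) || [exists z in ball e x n, e z y].
Proof. by rewrite /= in_setU in_set. Qed.

Lemma mem_ball_leq x m n y : m <= n -> y \in ball e x m -> y \in ball e x n.
Proof.
elim: n => [|n IH]; first by rewrite leqn0 => /eqP ->.
by rewrite leq_eqVlt => /orP [/eqP -> // | /IH H /H]; rewrite in_ballS => ->.
Qed.

Lemma mem_ball_edge x n z y : z \in ball e x n -> e z y -> y \in ball e x n.+1.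
Proof. by move=> Hz Hzy; rewrite in_ballS; apply/orP; right; apply/existsP; exists z; rewrite Hz. Qed.

Lemma mem_ball_path x n y p :
  path e y p -> y \in ball e x n -> last y p \in ball e x (n + size p).
Proof.
elim: p y n => [|z p IH] y n /=; first by rewrite addn0.
case/andP=> Hyz Hp Hy; rewrite addnS -addSn.
exact: IH Hp (mem_ball_edge Hy Hyz).
Qed.

Lemma dist_leq_card x y : dist e x y <= #|V|.
Proof. by have := find_size (fun n => y \in ball e x n) (iota 0 #|V|); rewrite size_iota. Qed.

Lemma mem_ball_dist x y : dist e x y < #|V| -> y \in ball e x (dist e x y).
Proof.
move=> Hlt; have Hhas : has (fun n => y \in ball e x n) (iota 0 #|V|).
  by rewrite has_find size_iota.
by have := nth_find 0 Hhas; rewrite nth_iota.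
Qed.

Lemma dist_leq_ball x y n : y \in ball e x n -> n < #|V| -> dist e x y <= n.
Proof.
move=> Hy Hn; rewrite leqNgt; apply/negP => Hlt.
by have := before_find 0 Hlt; rewrite nth_iota // Hy.
Qed.

Lemma dist_self x : dist e x x = 0.
Proof.
apply/eqP; rewrite -leqn0; apply: dist_leq_ball; first by rewrite in_ball0.
by apply/card_gt0P; exists x.
Qed.

Lemma connect_dist_lt x y : connect e x y -> dist e x y < #|V|.
Proof.
case/connectP=> p Hp ->; case: (shortenP Hp) => p' Hp' Huniq _.
have Hsize : size p' < #|V| by move/card_uniqP: Huniq => /= <-; exact: max_card.
have Hlast := mem_ball_path Hp' (_ : x \in ball e x 0).
rewrite add0n in_ball0 eqxx in Hlast.
exact: leq_ltn_trans (dist_leq_ball (Hlast isT) Hsize) Hsize.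
Qed.

Lemma dist_edge u y w : e y w -> dist e u w <= (dist e u y).+1.
Proof.
move=> Hyw; have [Hy|Hy] := ltnP (dist e u y).+1 #|V|; last first.
  exact: leq_trans (dist_leq_card _ _) Hy.
exact: dist_leq_ball (mem_ball_edge (mem_ball_dist (ltnW Hy)) Hyw) Hy.
Qed.

Lemma dist_predecessor u w : dist e u w < #|V| -> w != u ->
  exists2 y, e y w & (dist e u y).+1 = dist e u w.
Proof.
move=> Hlt Hwu; have := mem_ball_dist Hlt.
case Hd: (dist e u w) Hlt => [|k] Hlt; first by rewrite in_ball0 (negbTE Hwu).
rewrite in_ballS => /orP [Hw | /existsP [y /andP [Hy Hyw]]].
  by have := dist_leq_ball Hw (ltnW Hlt); rewrite Hd ltnn.
exists y => //; have := dist_leq_ball Hy (ltnW Hlt); have := dist_edge u Hyw.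
by rewrite Hd; lia.
Qed.

Lemma mem_closed_connect (s : seq V) u x :
  (forall w y, w \in s -> e w y -> y \in s) -> u \in s -> connect e u x -> x \in s.
Proof.
move=> Hcl Hu /connectP [p Hp ->]; elim: p u Hu Hp => [//|z p IH] u Hu /=.
by case/andP=> Huz; apply: IH (Hcl _ _ Hu Huz).
Qed.

End Distance.

Section SubRelation.
Variables (V : finType) (e e' : rel V).
(* Reflexive closure: [tree_rel] has a loop at every non-root fixed point of
   the parent function. *)
Hypothesis sub_e'e : forall z w, e' z w -> z = w \/ e z w.

Lemma mem_ball_subrel x n y : y \in ball e' x n -> y \in ball e x n.
Proof.
elim: n y => [//|n IH] y.
rewrite in_ballS => /orP [/IH Hy | /existsP [z /andP [/IH Hz /sub_e'e [<- | Hzy]]]].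
- by rewrite in_ballS Hy.
- exact: mem_ball_leq Hz.
- exact: mem_ball_edge Hz Hzy.
Qed.

Lemma dist_subrel x y : dist e x y <= dist e' x y.
Proof.
have [Hlt|Hge] := ltnP (dist e' x y) #|V|.
  exact: dist_leq_ball (mem_ball_subrel (mem_ball_dist Hlt)) Hlt.
exact: leq_trans (dist_leq_card e x y) Hge.
Qed.

End SubRelation.

Section ShortestPathTree.
Variables (V : finType) (e : rel V).

Definition dist_decreasing (u : V) (par : V -> V) : Prop :=
  forall x, x != u -> dist e u (par x) < dist e u x.

Lemma tree_rel_subrel (r : V) (par : V -> V) :
  symmetric e -> (forall w, par w = w \/ e (par w) w) ->
  forall x y, tree_rel r par x y -> x = y \/ e x y.
Proof.
move=> e_sym par_edge x y /orP [] /andP [_ /eqP <-].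
- by case: (par_edge x) => [-> | Hx]; [left | right; rewrite e_sym].
- by case: (par_edge y) => [-> | Hy]; [left | right].
Qed.

Lemma tree_dist_leq (u : V) (par : V -> V) x :
  connect e u x -> dist_decreasing u par -> dist (tree_rel u par) u x <= dist e u x.
Proof.
move=> Hux par_dec; apply: dist_leq_ball (connect_dist_lt Hux).
have in_tree_ball n z : dist e u z = n -> z \in ball (tree_rel u par) u n.
  elim/ltn_ind: n z => n IH z Hn; subst n.
  have [-> | Hzu] := eqVneq z u; first by rewrite dist_self in_ball0.
  have Hpar := par_dec z Hzu; move: Hpar (IH _ Hpar (par z) erefl).
  case: (dist e u z) => [//|k] Hpar Hball.
  apply: mem_ball_edge (mem_ball_leq (ltnSE Hpar) Hball) _.
  by rewrite /tree_rel Hzu eqxx orbT.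
exact: in_tree_ball.
Qed.

End ShortestPathTree.

Lemma pairwise_in2 (T : eqType) (r : rel T) (s : seq T) :
  {in s &, forall x y, r x y} -> pairwise r s.
Proof.
move=> Hr; apply: (@sub_in_pairwise _ (mem s) (fun _ _ => true)).
- by move=> x y Hx Hy _; apply: Hr.
- exact/allP.
- by elim: s {Hr} => //= x s ->; rewrite all_predT.
Qed.

Section BFS.
Variables (V : finType) (e : rel V) (adj : V -> seq V).
Hypothesis adj_e : adj_lists e adj.

Definition bfs_new (a : V) (vis : seq V) : seq V :=
  undup [seq w <- adj a | w \notin vis].

Lemma mem_bfs_new a vis w : (w \in bfs_new a vis) = e a w && (w \notin vis).
Proof. by rewrite mem_undup mem_filter (proj2 (adj_e a)) andbC. Qed.

Lemma bfs_loop_parent_edge f q vis (par : V -> V) :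
  (forall w, par w = w \/ e (par w) w) ->
  forall w, bfs_loop adj f q vis par w = w \/ e (bfs_loop adj f q vis par w) w.
Proof.
elim: f q vis par => [|f IH] [|a q] vis par par_edge //=.
apply: IH => w; case: ifP => [|_]; last exact: par_edge.
by rewrite -/(bfs_new a vis) mem_bfs_new => /andP [Haw _]; right.
Qed.

Lemma bfs_parent_edge v w : bfs_parent adj v w = w \/ e (bfs_parent adj v w) w.
Proof. by apply: bfs_loop_parent_edge; left. Qed.

Variable u : V.
Hypothesis u_connect : forall x, connect e u x.
Local Notation d := (dist e u).

Record bfs_inv (f : nat) (q vis : seq V) (par : V -> V) : Prop := BfsInv {
  bfs_inv_root : u \in vis;
  bfs_inv_uniq : uniq vis;
  (* [pre] lists the dequeued vertices, each dequeued once, so the fuel lasts. *)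
  bfs_inv_fuel : exists2 pre, vis = pre ++ q & #|V| <= f + size pre;
  bfs_inv_closed : forall w y, w \in vis -> w \notin q -> e w y -> y \in vis;
  bfs_inv_parent : forall w, w \in vis -> w != u -> d (par w) < d w;
  bfs_inv_sorted : pairwise (fun x y => d x <= d y) q;
  (* On an empty queue [head u q = u] is at distance 0: the last two fields
     are then vacuous. *)
  bfs_inv_spread : forall y, y \in q -> d y <= (d (head u q)).+1;
  bfs_inv_below : forall w, d w < d (head u q) -> w \in vis }.

Lemma bfs_inv_start : bfs_inv #|V| [:: u] [:: u] id.
Proof.
split=> //=; first by rewrite mem_head.
- by exists [::]; rewrite ?addn0.
- by move=> w y ->.
- by move=> w /[!inE] ->.
- by move=> y /[!inE] /eqP ->.
- by move=> w; rewrite dist_self.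
Qed.

Lemma bfs_inv_fuel0 q vis par : bfs_inv 0 q vis par -> q = [::].
Proof.
case=> _ Huniq [pre Hvis Hsize] _ _ _ _ _; apply/nilP.
have := max_card (mem vis); rewrite (card_uniqP Huniq) Hvis size_cat /nilp; lia.
Qed.

Lemma bfs_inv_nil f vis par : bfs_inv f [::] vis par -> dist_decreasing e u par.
Proof.
case=> Hu _ _ Hcl Hpar _ _ _ x Hx; apply: Hpar Hx.
by apply: mem_closed_connect (u_connect x) => // w y Hw; apply: Hcl.
Qed.

Lemma bfs_inv_visited f a q vis par w :
  bfs_inv f (a :: q) vis par -> d w <= d a -> w \in vis.
Proof.
case=> Hu _ _ Hcl _ Hsorted _ /= Hbelow Hwa.
move: Hsorted; rewrite pairwise_cons => /andP [/allP Hqa _].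
have [-> // | Hwu] := eqVneq w u.
have [y Hyw Hdy] := dist_predecessor (connect_dist_lt (u_connect w)) Hwu.
have Hya : d y < d a by lia.
apply: (Hcl y) Hyw; first exact: Hbelow.
apply/negP; rewrite in_cons => /orP [/eqP Eya | /Hqa]; last by lia.
by rewrite Eya ltnn in Hya.
Qed.

Lemma bfs_inv_new_dist f a q vis par w :
  bfs_inv f (a :: q) vis par -> w \in bfs_new a vis -> d w = (d a).+1.
Proof.
move=> Hinv; rewrite mem_bfs_new => /andP [Haw Hw].
have Hgt : ~~ (d w <= d a) by apply: contra Hw; apply: bfs_inv_visited Hinv.
have := dist_edge u Haw; lia.
Qed.

Lemma bfs_inv_step f a q vis par :
  bfs_inv f.+1 (a :: q) vis par ->
  bfs_inv f (q ++ bfs_new a vis) (vis ++ bfs_new a vis)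
    (fun w => if w \in bfs_new a vis then a else par w).
Proof.
move=> Hinv; have new_dist := bfs_inv_new_dist Hinv.
have visited := bfs_inv_visited Hinv.
case: Hinv => Hu Huniq [pre Hvis Hsize] Hcl Hpar Hsorted Hspread Hbelow.
rewrite /= in Hspread Hbelow.
move: Hsorted; rewrite pairwise_cons => /andP [/allP Hqa Hsorted].
set new := bfs_new a vis in new_dist *.
have Hrange y : y \in q ++ new -> d a <= d y <= (d a).+1.
  rewrite mem_cat => /orP [Hy | /new_dist ->]; last by rewrite leqnSn /=.
  by rewrite Hqa // Hspread // in_cons Hy orbT.
split.
- by rewrite mem_cat Hu.
- rewrite cat_uniq Huniq undup_uniq andbT; apply/hasPn => w.
  by rewrite mem_bfs_new => /andP [_ ->].
- exists (pre ++ [:: a]); first by rewrite Hvis -!catA.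
  by rewrite size_cat addn1 -addSnnS.
- move=> w y; rewrite !mem_cat negb_or => /orP [Hw | Hw] /andP [Hwq Hwn] Hwy;
    last by rewrite Hw in Hwn.
  have [Ewa | Hwa] := eqVneq w a.
    by rewrite mem_bfs_new -Ewa Hwy; case: (y \in vis).
  by rewrite (Hcl w) // in_cons negb_or Hwa.
- move=> w Hw Hwu; case: ifP => [/new_dist -> // | Hwn].
  by apply: Hpar Hwu; rewrite mem_cat Hwn orbF in Hw.
- rewrite pairwise_cat Hsorted; apply/and3P; split => //.
    apply/allrelP => x y Hx /new_dist ->; by rewrite Hspread // in_cons Hx orbT.
  by apply: pairwise_in2 => x y /new_dist -> /new_dist ->.
- case Hqn: (q ++ new) => [// | b s] y; rewrite -Hqn => /Hrange.
  have := Hrange b; rewrite Hqn mem_head => /(_ isT) /=; lia.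
- case Hqn: (q ++ new) => [| b s] w /=; first by rewrite dist_self.
  have := Hrange b; rewrite Hqn mem_head => /(_ isT) Hb Hwb.
  by rewrite mem_cat visited //; lia.
Qed.

Lemma bfs_loop_dist_decreasing f q vis par :
  bfs_inv f q vis par -> dist_decreasing e u (bfs_loop adj f q vis par).
Proof.
elim: f q vis par => [|f IH] [|a q] vis par Hinv; try exact: bfs_inv_nil Hinv.
- by have := bfs_inv_fuel0 Hinv.
- exact: IH (bfs_inv_step Hinv).
Qed.

Lemma bfs_parent_dist_decreasing : dist_decreasing e u (bfs_parent adj u).
Proof. exact: bfs_loop_dist_decreasing bfs_inv_start. Qed.

End BFS.

Section BFSTree.
Variables (V : finType) (e : rel V).

Lemma bfs_tree_parent_edge v par :
  is_bfs_tree e v par -> forall w, par w = w \/ e (par w) w.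
Proof. by case=> adj [adj_e ->]; apply: bfs_parent_edge. Qed.

Lemma dist_leq_bfs_tree v par a x :
  symmetric e -> is_bfs_tree e v par -> dist e a x <= dist (tree_rel v par) a x.
Proof.
by move=> e_sym /bfs_tree_parent_edge/(tree_rel_subrel e_sym)/dist_subrel.
Qed.

Lemma Sd_bfs_tree v par :
  simple_connected_graph e -> is_bfs_tree e v par -> Sd v par = \sum_x dist e v x.
Proof.
case=> _ [e_sym e_conn] Hbfs; apply: eq_bigr => x _; apply/eqP.
rewrite eqn_leq dist_leq_bfs_tree // andbT.
case: Hbfs => adj [adj_e ->]; apply: tree_dist_leq (e_conn v x) _.
exact: bfs_parent_dist_decreasing.
Qed.

End BFSTree.

Theorem lemma5p14 (V : finType) (e : rel V)
    (HC : simple_connected_graph e)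
    (P : V -> (V -> V))
    (HP : forall v : V, is_bfs_tree e v (P v))
    (r : V)
    (Hmin : forall v : V, Sd r (P r) <= Sd v (P v)) :
  is_centroid r (P r) r.
Proof.
have [_ [e_sym _]] := HC.
move=> w; apply: ler_wpM2r; first by rewrite invr_ge0 ler0n.
rewrite ler_nat; apply: leq_trans (Hmin w) _.
rewrite (Sd_bfs_tree HC (HP w)); apply: leq_sum => x _.
exact: dist_leq_bfs_tree.
Qed.
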